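(* Let $A,B,C$ be smooth functions on $[0,1]$ and consider the Abel equation $$\frac{dx}{dt}=A(t)x^3+B(t)x^2+C(t)x,\qquad t\in[0,1].$$ Assume that there exist real numbers $a,b,c$ such that $aA(t)+bB(t)$ is not identically zero and does not change sign on $[0,1]$, and such that $$(bC(t)-cA(t))^2+(aA(t)+bB(t))(cB(t)+aC(t))<0\quad\text{for all } t\in[0,1].$$ Then the equation has at most four non-zero periodic orbits.
   Context: A periodic orbit is a solution $x(t)$ defined on all of $[0,1]$ with $x(0)=x(1)$; $x\equiv0$ is always one, and non-zero periodic orbits are the others. *)

From Stdlib Require Import Reals Lra List.
From Coquelicot Require Import Coquelicot.
Open Scope R_scope.

Definition smooth (f : R -> R) : Prop :=
  forall (n : nat) (t : R), ex_derive_n f n t.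

Definition abel_rhs (A B C : R -> R) (t x : R) : R :=
  A t * x ^ 3 + B t * x ^ 2 + C t * x.

(* Derivative of x at t relative to [0,1] (one-sided at the endpoints). *)
Definition has_deriv_on01 (x : R -> R) (t l : R) : Prop :=
  filterlim (fun h => (x (t + h) - x t) / h)
    (within (fun h => h <> 0 /\ 0 <= t + h <= 1) (locally 0))
    (locally l).

Definition abel_solution (A B C : R -> R) (x : R -> R) : Prop :=
  forall t, 0 <= t <= 1 -> has_deriv_on01 x t (abel_rhs A B C t (x t)).

Definition periodic_orbit (A B C : R -> R) (x : R -> R) : Prop :=
  abel_solution A B C x /\ x 0 = x 1.

Definition nonzero_periodic_orbit (A B C : R -> R) (x : R -> R) : Prop :=
  periodic_orbit A B C x /\ exists t, 0 <= t <= 1 /\ x t <> 0.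

Definition differ_on01 (x y : R -> R) : Prop :=
  exists t, 0 <= t <= 1 /\ x t <> y t.

From Stdlib Require Import Reals Lra Lia List Classical.
From Coquelicot Require Import Coquelicot.
Open Scope R_scope.

(* Write [q(y) = b y^2 - a y + c] and [P_t(y) = A y^2 + B y + C], so that the equation reads
   [x' = x P_t(x)].  The hypothesis gives [(aA + bB) (P_t' q - P_t q') < 0] for all [y],
   so [y |-> P_t(y) / q(y)] is strictly monotone, in a direction independent of [t], on every
   interval where [q] does not vanish.

   A nonzero periodic orbit never meets [0] (uniqueness of solutions), nor a root [r] of [q]:
   there [x' = r P_t(r)] has a sign independent of [t], so [x - r] can only change sign in
   one direction, which is impossible for a periodic function.  Hence each orbit stays in one
   of the at most four components of [{y | y q(y) <> 0}].  Two distinct orbits [x1], [x2] in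
   the same component are impossible: for [h' = 1 / (y q(y))] the function
   [h(x2) - h(x1)] is periodic, yet its derivative [P_t/q (x2) - P_t/q (x1)] never vanishes. *)

(* Solutions are only defined on [[0, 1]], with one-sided derivatives at the ends; composing
   with the clamp gives functions continuous on all of [R], to which MVT and IVT apply. *)
Definition clamp01 (t : R) : R := Rmax 0 (Rmin 1 t).
Definition extend01 (x : R -> R) (t : R) : R := x (clamp01 t).

Lemma clamp01_in t : 0 <= clamp01 t <= 1.
Proof. unfold clamp01, Rmax, Rmin; repeat destruct Rle_dec; lra. Qed.

Lemma clamp01_id t : 0 <= t <= 1 -> clamp01 t = t.
Proof. unfold clamp01, Rmax, Rmin; repeat destruct Rle_dec; lra. Qed.

Lemma clamp01_lipschitz s t : Rabs (clamp01 s - clamp01 t) <= Rabs (s - t).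
Proof.
  unfold clamp01, Rmax, Rmin; repeat destruct Rle_dec;
    unfold Rabs; repeat destruct Rcase_abs; lra.
Qed.

Lemma extend01_id x t : 0 <= t <= 1 -> extend01 x t = x t.
Proof. intros Ht; unfold extend01; rewrite clamp01_id; auto. Qed.

Lemma continuity_pt_extend01 f :
  (forall s, 0 <= s <= 1 -> continuity_pt f s) -> forall t, continuity_pt (extend01 f) t.
Proof.
  intros Hf t; apply (continuity_pt_comp clamp01 f).
  - intros eps Heps; exists eps; split; [exact Heps|].
    intros s [_ Hs]; exact (Rle_lt_trans _ _ _ (clamp01_lipschitz s t) Hs).
  - apply Hf, clamp01_in.
Qed.

Lemma smooth_continuity_pt f : smooth f -> forall t, continuity_pt f t.
Proof.
  intros Hf t; apply continuity_pt_filterlim, (ex_derive_continuous f), (Hf 1%nat t).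
Qed.

Lemma continuity_pt_pos_near f m :
  continuity_pt f m -> 0 < f m -> exists alp, 0 < alp /\ forall s, Rabs (s - m) < alp -> 0 < f s.
Proof.
  intros Hf Hm; destruct (Hf (f m) Hm) as [alp [Halp Hs]].
  exists alp; split; [exact Halp|]; intros s Hsm.
  destruct (Req_dec s m) as [->|Hne]; [exact Hm|].
  specialize (Hs s (conj (conj I (not_eq_sym Hne)) Hsm)); simpl in Hs; unfold R_dist in Hs.
  unfold Rabs in Hs; destruct Rcase_abs in Hs; lra.
Qed.

Lemma has_deriv_on01_quotient x t l : has_deriv_on01 x t l ->
  forall eps, 0 < eps -> exists del, 0 < del /\ forall s, 0 <= s <= 1 -> s <> t ->
    Rabs (s - t) < del -> Rabs ((x s - x t) / (s - t) - l) < eps.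
Proof.
  intros Hx eps Heps.
  destruct (proj1 (filterlim_locally _ _) Hx (mkposreal eps Heps)) as [del Hdel].
  exists del; split; [apply cond_pos|]; intros s Hs Hst Hsd.
  assert (Hball : ball 0 del (s - t)) by (apply Rabs_lt_between'; apply Rabs_lt_between' in Hsd; lra).
  specialize (Hdel (s - t) Hball); replace (t + (s - t)) with s in Hdel by ring.
  apply Hdel; split; [intros E; apply Hst; lra | exact Hs].
Qed.

Lemma has_deriv_on01_lipschitz_near x t l : has_deriv_on01 x t l ->
  exists del, 0 < del /\ forall s, 0 <= s <= 1 -> Rabs (s - t) < del ->
    Rabs (x s - x t) <= (Rabs l + 1) * Rabs (s - t).
Proof.
  intros Hx; destruct (has_deriv_on01_quotient x t l Hx 1 Rlt_0_1) as [del [Hdel Hq]].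
  exists del; split; [exact Hdel|]; intros s Hs Hsd.
  destruct (Req_dec s t) as [->|Hst].
  { rewrite !Rminus_diag, Rabs_R0, Rmult_0_r; lra. }
  specialize (Hq s Hs Hst Hsd).
  assert (Hst' : s - t <> 0) by (intros E; apply Hst; lra).
  replace (x s - x t) with ((x s - x t) / (s - t) * (s - t)) by (field; exact Hst').
  rewrite Rabs_mult; apply Rmult_le_compat_r; [apply Rabs_pos|].
  pose proof (Rabs_triang_inv ((x s - x t) / (s - t)) l); lra.
Qed.

Lemma has_deriv_on01_continuity_pt x l :
  (forall t, 0 <= t <= 1 -> has_deriv_on01 x t (l t)) -> forall t, continuity_pt (extend01 x) t.
Proof.
  intros Hx t eps Heps; set (c := clamp01 t); set (k := Rabs (l c) + 1).
  destruct (has_deriv_on01_lipschitz_near x c (l c) (Hx c (clamp01_in t))) as [del [Hdel Hlip]].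
  assert (Hk : 0 < k) by (pose proof (Rabs_pos (l c)); unfold k; lra).
  exists (Rmin del (eps / k)); split; [apply Rmin_glb_lt; [exact Hdel | apply Rdiv_lt_0_compat; lra]|].
  intros s [_ Hs]; simpl in *; unfold R_dist in *.
  pose proof (Rmin_l del (eps / k)); pose proof (Rmin_r del (eps / k)).
  pose proof (clamp01_lipschitz s t) as Hcl; fold c in Hcl.
  unfold extend01; fold c.
  eapply Rle_lt_trans; [apply (Hlip _ (clamp01_in s)); lra|].
  apply Rle_lt_trans with (k * Rabs (s - t)); [apply Rmult_le_compat_l; lra|].
  apply Rmult_lt_reg_l with (/ k); [apply Rinv_0_lt_compat; exact Hk|].
  rewrite <- Rmult_assoc, Rinv_l, Rmult_1_l by lra.
  unfold Rdiv in *; lra.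
Qed.

Lemma has_deriv_on01_is_derive x t l :
  has_deriv_on01 x t l -> 0 < t < 1 -> is_derive (extend01 x) t l.
Proof.
  intros Hx Ht; apply is_derive_Reals; intros eps Heps.
  destruct (has_deriv_on01_quotient x t l Hx eps Heps) as [del [Hdel Hq]].
  assert (Hpos : 0 < Rmin del (Rmin t (1 - t))) by (repeat apply Rmin_glb_lt; lra).
  exists (mkposreal _ Hpos); simpl; intros h Hh0 Hh.
  pose proof (Rmin_l del (Rmin t (1 - t))); pose proof (Rmin_r del (Rmin t (1 - t))).
  pose proof (Rmin_l t (1 - t)); pose proof (Rmin_r t (1 - t)).
  apply Rabs_lt_between in Hh.
  unfold extend01; rewrite !clamp01_id by lra.
  replace h with (t + h - t) at 2 by ring.
  apply Hq; [lra | intros E; apply Hh0; lra | apply Rabs_lt_between'; lra].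
Qed.

Lemma has_deriv_on01_sign x t d k : has_deriv_on01 x t d -> 0 < k * d ->
  exists del, 0 < del /\ forall s, 0 <= s <= 1 -> s <> t -> Rabs (s - t) < del ->
    0 < k * (x s - x t) * (s - t).
Proof.
  intros Hx Hkd.
  assert (Hd : 0 < Rabs d) by (apply Rabs_pos_lt; intros E; rewrite E, Rmult_0_r in Hkd; lra).
  destruct (has_deriv_on01_quotient x t d Hx _ Hd) as [del [Hdel Hq]].
  exists del; split; [exact Hdel|]; intros s Hs Hst Hsd.
  specialize (Hq s Hs Hst Hsd); set (u := (x s - x t) / (s - t)) in Hq.
  assert (Hst' : s - t <> 0) by (intros E; apply Hst; lra).
  assert (Hdu : 0 < d * u) by (unfold Rabs in *; repeat destruct Rcase_abs; nra).
  assert (Hku : 0 < k * u) by nra.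
  replace (k * (x s - x t) * (s - t)) with (k * u * ((s - t) * (s - t))) by (unfold u; field; exact Hst').
  apply Rmult_lt_0_compat; [exact Hku | nra].
Qed.

Lemma abel_solution_continuity_pt A B C x :
  abel_solution A B C x -> forall t, continuity_pt (extend01 x) t.
Proof. exact (has_deriv_on01_continuity_pt x (fun t => abel_rhs A B C t (x t))). Qed.

Lemma abel_solution_is_derive A B C x : abel_solution A B C x ->
  forall t, 0 < t < 1 -> is_derive (extend01 x) t (abel_rhs A B C t (x t)).
Proof. intros Hx t Ht; apply has_deriv_on01_is_derive; [apply Hx; lra | exact Ht]. Qed.

Lemma MVT_closed f df u v : u <= v ->
  (forall s, u < s < v -> is_derive f s (df s)) ->
  (forall s, u <= s <= v -> continuity_pt f s) ->
  exists c, u <= c <= v /\ f v - f u = df c * (v - u).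
Proof.
  intros Huv Hd Hc; destruct (MVT_gen f u v df) as [c Hc']; simpl in *;
    rewrite ?Rmin_left, ?Rmax_right in * by lra; eauto.
Qed.

Lemma continuity_pt_bounded f a b : a <= b ->
  (forall t, a <= t <= b -> continuity_pt f t) -> exists M, forall t, a <= t <= b -> Rabs (f t) <= M.
Proof.
  intros Hab Hf; destruct (continuity_ab_maj (fun t => Rabs (f t)) a b Hab) as [m [Hm _]].
  - intros t Ht; apply (continuity_pt_comp f Rabs); [exact (Hf t Ht) | apply Rcontinuity_abs].
  - exists (Rabs (f m)); exact Hm.
Qed.

Lemma is_derive_sq_exp D dD k s : is_derive D s dD ->
  is_derive (fun s => D s ^ 2 * exp (k * s)) s ((2 * D s * dD + k * D s ^ 2) * exp (k * s)).
Proof.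
  intros HD.
  assert (Hexp : is_derive (fun s => exp (k * s)) s (k * exp (k * s))) by (auto_derive; [auto | ring]).
  pose proof (is_derive_mult _ _ _ _ _ (is_derive_pow D 2 s dD HD) Hexp Rmult_comm) as H.
  replace ((2 * D s * dD + k * D s ^ 2) * exp (k * s))
    with (plus (mult (INR 2 * dD * D s ^ 1) (exp (k * s))) (mult (D s ^ 2) (k * exp (k * s))))
    by (unfold plus, mult; simpl; ring).
  exact H.
Qed.

Lemma continuity_pt_sq_exp D k s :
  continuity_pt D s -> continuity_pt (fun s => D s ^ 2 * exp (k * s)) s.
Proof.
  intros HD; apply continuity_pt_mult.
  - apply (continuity_pt_comp D (fun u => u ^ 2)); [exact HD | apply derivable_continuous_pt, derivable_pt_pow].
  - apply (continuity_pt_comp (fun s => k * s) exp); [|apply derivable_continuous_pt, derivable_pt_exp].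
    apply continuity_pt_mult; [apply continuity_pt_const; intros ? ?; reflexivity | apply continuity_pt_id].
Qed.

(* [D^2 exp (-2 M t)] is nonincreasing and [D^2 exp (2 M t)] nondecreasing. *)
Lemma linear_ode_zero D K M a b :
  (forall t, a <= t <= b -> continuity_pt D t) ->
  (forall t, a < t < b -> is_derive D t (D t * K t)) ->
  (forall t, a <= t <= b -> Rabs (K t) <= M) ->
  forall t0, a <= t0 <= b -> D t0 = 0 -> forall t, a <= t <= b -> D t = 0.
Proof.
  intros Hc Hd HK t0 Ht0 HD0 t Ht.
  assert (Hmvt : forall k u v, a <= u -> u <= v -> v <= b -> exists c, u <= c <= v /\
      D v ^ 2 * exp (k * v) - D u ^ 2 * exp (k * u) = D c ^ 2 * (2 * K c + k) * exp (k * c) * (v - u)).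
  { intros k u v Hu Huv Hv.
    destruct (MVT_closed (fun s => D s ^ 2 * exp (k * s))
      (fun s => (2 * D s * (D s * K s) + k * D s ^ 2) * exp (k * s)) u v Huv) as [c [Hc' E]].
    - intros s Hs; apply is_derive_sq_exp, Hd; lra.
    - intros s Hs; apply continuity_pt_sq_exp, Hc; lra.
    - exists c; split; [exact Hc'|]; rewrite E; ring. }
  assert (HKM : forall c, a <= c <= b -> - M <= K c <= M).
  { intros c Hc'; apply Rabs_le_between, HK, Hc'. }
  assert (Hsq : 0 <= D t ^ 2) by apply pow2_ge_0.
  destruct (Rle_or_lt t0 t) as [Hle|Hlt].
  - destruct (Hmvt (-2 * M) t0 t) as [c [Hc' E]]; try lra.
    pose proof (HKM c ltac:(lra)); pose proof (pow2_ge_0 (D c)).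
    pose proof (exp_pos (-2 * M * c)); pose proof (exp_pos (-2 * M * t)).
    rewrite HD0 in E.
    assert (D c ^ 2 * (2 * K c + -2 * M) * exp (-2 * M * c) * (t - t0) <= 0).
    { apply Rmult_le_0_r; [|lra]; rewrite Rmult_comm; apply Rmult_le_0_l; [lra|].
      apply Rmult_le_0_l; lra. }
    assert (D t ^ 2 = 0) by (simpl in *; nra).
    apply Rsqr_0_uniq; unfold Rsqr; simpl in *; lra.
  - destruct (Hmvt (2 * M) t t0) as [c [Hc' E]]; try lra.
    pose proof (HKM c ltac:(lra)); pose proof (pow2_ge_0 (D c)).
    pose proof (exp_pos (2 * M * c)); pose proof (exp_pos (2 * M * t)).
    rewrite HD0 in E.
    assert (0 <= D c ^ 2 * (2 * K c + 2 * M) * exp (2 * M * c) * (t0 - t)).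
    { apply Rmult_le_pos; [|lra]; apply Rmult_le_pos; [|lra]; apply Rmult_le_pos; lra. }
    assert (D t ^ 2 = 0) by (simpl in *; nra).
    apply Rsqr_0_uniq; unfold Rsqr; simpl in *; lra.
Qed.

Lemma abel_solution_unique A B C x y :
  (forall t, 0 <= t <= 1 -> continuity_pt A t) ->
  (forall t, 0 <= t <= 1 -> continuity_pt B t) ->
  (forall t, 0 <= t <= 1 -> continuity_pt C t) ->
  abel_solution A B C x -> abel_solution A B C y ->
  forall t0, 0 <= t0 <= 1 -> x t0 = y t0 -> forall t, 0 <= t <= 1 -> x t = y t.
Proof.
  intros HA HB HC Hx Hy t0 Ht0 E t Ht.
  set (X := extend01 x); set (Y := extend01 y).
  set (K := fun s => extend01 A s * (X s ^ 2 + X s * Y s + Y s ^ 2)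
                     + extend01 B s * (X s + Y s) + extend01 C s).
  pose proof (continuity_pt_extend01 A HA) as CA.
  pose proof (continuity_pt_extend01 B HB) as CB.
  pose proof (continuity_pt_extend01 C HC) as CC.
  pose proof (abel_solution_continuity_pt A B C x Hx) as CX.
  pose proof (abel_solution_continuity_pt A B C y Hy) as CY.
  assert (CK : forall s, continuity_pt K s).
  { intros s; unfold K, pow.
    repeat first [apply continuity_pt_plus | apply continuity_pt_mult
                 | apply continuity_pt_const; intros ? ?; reflexivity | auto]. }
  destruct (continuity_pt_bounded K 0 1 ltac:(lra) (fun s _ => CK s)) as [M HM].
  assert (HD : forall s, 0 < s < 1 -> is_derive (fun s => X s - Y s) s ((X s - Y s) * K s)).
  { intros s Hs.
    pose proof (is_derive_minus _ _ _ _ _ (abel_solution_is_derive A B C x Hx s Hs)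
                  (abel_solution_is_derive A B C y Hy s Hs)) as H.
    unfold minus, plus, opp in H; simpl in H.
    unfold K, X, Y; rewrite !extend01_id by lra.
    replace ((x s - y s) * _) with (abel_rhs A B C s (x s) + - abel_rhs A B C s (y s))
      by (unfold abel_rhs; ring).
    exact H. }
  assert (Hz := linear_ode_zero (fun s => X s - Y s) K M 0 1
    (fun s _ => continuity_pt_minus _ _ s (CX s) (CY s)) HD HM t0 Ht0).
  unfold X, Y in Hz; rewrite !extend01_id in Hz by lra.
  specialize (Hz ltac:(lra) t Ht); simpl in Hz; rewrite !extend01_id in Hz by lra; lra.
Qed.

Lemma zero_abel_solution A B C : abel_solution A B C (fun _ => 0).
Proof.
  intros t Ht; unfold has_deriv_on01.
  replace (abel_rhs A B C t 0) with 0 by (unfold abel_rhs; ring).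
  apply filterlim_locally; intros eps; exists eps; intros h _ _.
  unfold Rdiv; rewrite Rminus_diag, Rmult_0_l; apply ball_center.
Qed.

Lemma nonzero_periodic_orbit_neq0 A B C x :
  (forall t, 0 <= t <= 1 -> continuity_pt A t) ->
  (forall t, 0 <= t <= 1 -> continuity_pt B t) ->
  (forall t, 0 <= t <= 1 -> continuity_pt C t) ->
  nonzero_periodic_orbit A B C x -> forall t, 0 <= t <= 1 -> x t <> 0.
Proof.
  intros HA HB HC [[Hx _] [t1 [Ht1 Hx1]]] t Ht E; apply Hx1.
  exact (abel_solution_unique A B C x (fun _ => 0) HA HB HC Hx (zero_abel_solution A B C) t Ht E t1 Ht1).
Qed.

Definition crosses_zero_upward (F : R -> R) (a b : R) : Prop :=
  forall t, a <= t <= b -> F t = 0 -> exists d, 0 < d /\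
    forall s, a <= s <= b -> s <> t -> Rabs (s - t) < d -> 0 < F s * (s - t).

Lemma crosses_zero_upward_nonneg F a b u v :
  (forall t, a <= t <= b -> continuity_pt F t) -> crosses_zero_upward F a b ->
  a <= u -> u <= v -> v <= b -> 0 <= F u -> 0 <= F v.
Proof.
  intros HC HZ Hau Huv Hvb Fu; apply Rnot_lt_le; intros Fv.
  set (E := fun s => u <= s <= v /\ 0 <= F s).
  destruct (completeness E) as [m [Hub Hlub]].
  { exists v; intros s [Hs _]; lra. }
  { exists u; split; [lra | exact Fu]. }
  assert (Hum : u <= m) by (apply Hub; split; [lra | exact Fu]).
  assert (Hmv : m <= v) by (apply Hlub; intros s [Hs _]; lra).
  assert (Fm : 0 <= F m).
  { apply Rnot_lt_le; intros Fm.
    destruct (continuity_pt_pos_near (fun s => - F s) m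
                (continuity_pt_opp _ _ (HC m ltac:(lra))) ltac:(lra)) as [alp [Halp Hneg]].
    enough (m <= m - alp / 2) by lra.
    apply Hlub; intros s [Hs Fs].
    destruct (Rle_or_lt s (m - alp / 2)) as [|Hs']; [assumption|].
    assert (s <= m) by (apply Hub; split; assumption).
    specialize (Hneg s ltac:(apply Rabs_lt_between'; lra)); lra. }
  assert (Hmv' : m < v) by (destruct (Req_dec m v) as [->|]; lra).
  assert (Hright : exists r, 0 < r /\ forall s, m < s <= v -> s - m < r -> 0 < F s).
  { destruct (Rlt_or_le 0 (F m)) as [Fp|F0].
    - destruct (continuity_pt_pos_near F m (HC m ltac:(lra)) Fp) as [r [Hr Hpos]].
      exists r; split; [exact Hr|]; intros s Hs Hsr; apply Hpos, Rabs_lt_between'; lra.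
    - destruct (HZ m ltac:(lra) ltac:(lra)) as [r [Hr Hup]].
      exists r; split; [exact Hr|]; intros s Hs Hsr.
      specialize (Hup s ltac:(lra) ltac:(lra) ltac:(apply Rabs_lt_between'; lra)); nra. }
  destruct Hright as [r [Hr Hpos]].
  set (s := m + Rmin r (v - m) / 2).
  pose proof (Rmin_l r (v - m)); pose proof (Rmin_r r (v - m)).
  assert (0 < Rmin r (v - m)) by (apply Rmin_glb_lt; lra).
  assert (Fs : 0 < F s) by (apply Hpos; unfold s; lra).
  assert (s <= m) by (apply Hub; split; [unfold s; lra | lra]).
  unfold s in *; lra.
Qed.

(* [F] is negative just left of a zero [t0 > a], so [F a < 0] (else [F] would cross downward
   in [(a, t0)]); then [F b = F a < 0] is a downward crossing after [t0]. *)
Lemma crosses_zero_upward_periodic_neq0 F a b : a < b ->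
  (forall t, a <= t <= b -> continuity_pt F t) -> crosses_zero_upward F a b -> F a = F b ->
  forall t, a <= t <= b -> F t <> 0.
Proof.
  intros Hab HC HZ Eab.
  assert (Hint : forall t, a < t <= b -> F t <> 0).
  { intros t0 Ht0 F0.
    destruct (HZ t0 ltac:(lra) F0) as [d [Hd Hup]].
    set (s := t0 - Rmin d (t0 - a) / 2).
    pose proof (Rmin_l d (t0 - a)); pose proof (Rmin_r d (t0 - a)).
    assert (0 < Rmin d (t0 - a)) by (apply Rmin_glb_lt; lra).
    assert (Fs : F s < 0).
    { specialize (Hup s ltac:(unfold s; lra) ltac:(unfold s; lra)
                    ltac:(apply Rabs_lt_between'; unfold s; lra)).
      unfold s in *; nra. }
    assert (Fa : F a < 0).
    { apply Rnot_le_lt; intros Fa.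
      pose proof (crosses_zero_upward_nonneg F a b a s HC HZ ltac:(lra) ltac:(unfold s; lra)
                    ltac:(unfold s; lra) Fa); lra. }
    assert (Ht0b : t0 < b) by (destruct (Req_dec t0 b) as [->|]; lra).
    pose proof (crosses_zero_upward_nonneg F a b t0 b HC HZ ltac:(lra) ltac:(lra) ltac:(lra)
                  ltac:(lra)); lra. }
  intros t Ht F0; destruct (Req_dec t a) as [->|Hta].
  - apply (Hint b); [lra | congruence].
  - apply (Hint t); [lra | exact F0].
Qed.

Definition qpoly (a b c y : R) : R := b * y ^ 2 - a * y + c.
Definition ppoly (Av Bv Cv y : R) : R := Av * y ^ 2 + Bv * y + Cv.
Definition criterion (a b c Av Bv Cv : R) : R :=
  (b * Cv - c * Av) ^ 2 + (a * Av + b * Bv) * (c * Bv + a * Cv).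

Lemma abel_rhs_ppoly A B C t x : abel_rhs A B C t x = x * ppoly (A t) (B t) (C t) x.
Proof. unfold abel_rhs, ppoly; ring. Qed.

(* [(aA + bB) (P' q - P q') = criterion - ((aA + bB) y + bC - cA)^2]. *)
Lemma ratio_numerator_neg a b c Av Bv Cv y : criterion a b c Av Bv Cv < 0 ->
  (a * Av + b * Bv) * ((2 * Av * y + Bv) * qpoly a b c y - ppoly Av Bv Cv y * (2 * b * y - a)) < 0.
Proof.
  unfold criterion, qpoly, ppoly; intros H.
  pose proof (pow2_ge_0 ((a * Av + b * Bv) * y + b * Cv - c * Av)); nra.
Qed.

Lemma ratio_strict_mono a b c Av Bv Cv y1 y2 : criterion a b c Av Bv Cv < 0 -> y1 < y2 ->
  (forall w, y1 <= w <= y2 -> qpoly a b c w <> 0) ->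
  (a * Av + b * Bv) * (ppoly Av Bv Cv y2 / qpoly a b c y2 - ppoly Av Bv Cv y1 / qpoly a b c y1) < 0.
Proof.
  intros Hcr H12 Hq.
  set (num := fun y => (2 * Av * y + Bv) * qpoly a b c y - ppoly Av Bv Cv y * (2 * b * y - a)).
  destruct (MVT_closed (fun y => ppoly Av Bv Cv y / qpoly a b c y)
              (fun y => num y / qpoly a b c y ^ 2) y1 y2) as [m [Hm E]].
  - lra.
  - intros y Hy; pose proof (Hq y ltac:(lra)); unfold num, qpoly, ppoly in *.
    auto_derive; [assumption | field; assumption].
  - intros y Hy; pose proof (Hq y Hy); unfold qpoly, ppoly in *.
    apply continuity_pt_filterlim, (ex_derive_continuous (fun y => _ / _)).
    auto_derive; assumption.
  - rewrite E; pose proof (ratio_numerator_neg a b c Av Bv Cv m Hcr); fold (num m) in *.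
    pose proof (Hq m Hm) as Hqm.
    assert (0 < qpoly a b c m ^ 2) by (apply pow2_gt_0; exact Hqm).
    replace ((a * Av + b * Bv) * (num m / qpoly a b c m ^ 2 * (y2 - y1)))
      with ((a * Av + b * Bv) * num m * ((y2 - y1) / qpoly a b c m ^ 2)) by (field; exact Hqm).
    apply Rmult_neg_pos; [assumption | apply Rdiv_lt_0_compat; lra].
Qed.

Lemma qpoly_root_sign a b c Av Bv Cv r : criterion a b c Av Bv Cv < 0 -> qpoly a b c r = 0 ->
  0 < (a * Av + b * Bv) * ppoly Av Bv Cv r * (2 * b * r - a).
Proof.
  intros Hcr Hr; pose proof (ratio_numerator_neg a b c Av Bv Cv r Hcr) as H.
  rewrite Hr in H; lra.
Qed.

Lemma qpoly_root_velocity_sign a b c Av Bv Cv sg r :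
  0 < sg * (a * Av + b * Bv) -> criterion a b c Av Bv Cv < 0 -> qpoly a b c r = 0 -> r <> 0 ->
  0 < sg * (2 * b * r - a) * r * (r * ppoly Av Bv Cv r).
Proof.
  intros HL Hcr Hr Hr0; pose proof (qpoly_root_sign a b c Av Bv Cv r Hcr Hr) as HLu.
  set (L := a * Av + b * Bv) in *; set (u := ppoly Av Bv Cv r * (2 * b * r - a)).
  assert (Hprod : 0 < (L * L) * (sg * u)).
  { replace (L * L * (sg * u)) with (sg * L * (L * ppoly Av Bv Cv r * (2 * b * r - a)))
      by (unfold u; ring).
    apply Rmult_lt_0_compat; assumption. }
  assert (Hu : 0 < sg * u).
  { destruct (Rle_or_lt (sg * u) 0); [|assumption]; pose proof (Rle_0_sqr L); unfold Rsqr in *; nra. }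
  replace (sg * (2 * b * r - a) * r * (r * ppoly Av Bv Cv r)) with ((r * r) * (sg * u)) by (unfold u; ring).
  apply Rmult_lt_0_compat; [apply Rsqr_pos_lt, Hr0 | exact Hu].
Qed.

Lemma periodic_orbit_qpoly_neq0 A B C a b c sg x :
  (forall t, 0 <= t <= 1 -> continuity_pt A t) ->
  (forall t, 0 <= t <= 1 -> continuity_pt B t) ->
  (forall t, 0 <= t <= 1 -> continuity_pt C t) ->
  (forall t, 0 <= t <= 1 -> 0 < sg * (a * A t + b * B t)) ->
  (forall t, 0 <= t <= 1 -> criterion a b c (A t) (B t) (C t) < 0) ->
  nonzero_periodic_orbit A B C x -> forall t, 0 <= t <= 1 -> qpoly a b c (x t) <> 0.
Proof.
  intros HA HB HC Hsg Hcr Hx t0 Ht0 Hq0.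
  pose proof (nonzero_periodic_orbit_neq0 A B C x HA HB HC Hx t0 Ht0) as Hr.
  destruct Hx as [[Hsol Hper] _].
  set (r := x t0) in *.
  (* [k] has the sign of the velocity [r P_t(r)] at the level [r], for every [t]. *)
  set (k := sg * (2 * b * r - a) * r).
  assert (Hk : forall t, 0 <= t <= 1 -> 0 < k * (r * ppoly (A t) (B t) (C t) r))
    by (intros t Ht; exact (qpoly_root_velocity_sign a b c _ _ _ sg r (Hsg t Ht) (Hcr t Ht) Hq0 Hr)).
  set (F := fun s => k * (extend01 x s - r)).
  assert (HZ : crosses_zero_upward F 0 1).
  { intros t Ht Ft; unfold F in Ft; rewrite extend01_id in Ft by exact Ht.
    pose proof (Hk t Ht) as Hkt.
    assert (Hxt : x t = r).
    { apply Rmult_integral in Ft; destruct Ft as [E|E]; [rewrite E, Rmult_0_l in Hkt; lra | lra]. }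
    replace (k * (r * ppoly (A t) (B t) (C t) r)) with (k * abel_rhs A B C t (x t)) in Hkt
      by (rewrite abel_rhs_ppoly, Hxt; reflexivity).
    destruct (has_deriv_on01_sign x t _ k (Hsol t Ht) Hkt) as [d [Hd Hup]].
    exists d; split; [exact Hd|]; intros s Hs Hst Hsd.
    unfold F; rewrite extend01_id, <- Hxt by exact Hs; exact (Hup s Hs Hst Hsd). }
  apply (crosses_zero_upward_periodic_neq0 F 0 1 Rlt_0_1) with t0; [| exact HZ | | exact Ht0 |].
  - intros t _; apply continuity_pt_mult; [apply continuity_pt_const; intros ? ?; reflexivity|].
    apply continuity_pt_minus; [apply (abel_solution_continuity_pt A B C x Hsol)|].
    apply continuity_pt_const; intros ? ?; reflexivity.
  - unfold F; rewrite !extend01_id, Hper by lra; reflexivity.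
  - unfold F; rewrite extend01_id by exact Ht0; fold r; ring.
Qed.

Definition nonvanishing_between (g : R -> R) (y z : R) : Prop :=
  forall w, Rmin y z <= w <= Rmax y z -> g w <> 0.

Lemma nonvanishing_between_sym g y z :
  nonvanishing_between g y z -> nonvanishing_between g z y.
Proof. intros H w Hw; apply H; rewrite Rmin_comm, Rmax_comm; exact Hw. Qed.

Lemma nonvanishing_between_trans g y z u :
  nonvanishing_between g y z -> nonvanishing_between g z u -> nonvanishing_between g y u.
Proof.
  intros H1 H2 w Hw.
  destruct (Rle_or_lt (Rmin y z) w); destruct (Rle_or_lt w (Rmax y z));
    [apply H1; lra | apply H2 | apply H2 | ];
    unfold Rmin, Rmax in *; repeat destruct Rle_dec; lra.
Qed.

Lemma nonvanishing_between_r g y z : nonvanishing_between g y z -> g z <> 0.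
Proof. intros H; apply H; unfold Rmin, Rmax; destruct Rle_dec; lra. Qed.

Lemma nonvanishing_between_locally g y0 y : continuous g y ->
  nonvanishing_between g y0 y -> locally y (fun z => nonvanishing_between g y0 z).
Proof.
  intros Hg Hy.
  assert (Hgy : 0 < Rabs (g y)) by (apply Rabs_pos_lt, (nonvanishing_between_r g y0 y Hy)).
  destruct (continuity_pt_pos_near (fun w => Rabs (g w)) y) as [eps [Heps Hnear]]; [|exact Hgy|].
  { apply (continuity_pt_comp g Rabs); [apply continuity_pt_filterlim, Hg | apply Rcontinuity_abs]. }
  assert (Hnear' : forall w, Rabs (w - y) < eps -> g w <> 0).
  { intros w Hw E; specialize (Hnear w Hw); rewrite E, Rabs_R0 in Hnear; lra. }
  exists (mkposreal eps Heps); intros z Hz w Hw; change (Rabs (z - y) < eps) in Hz.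
  apply Rabs_lt_between' in Hz.
  destruct (Rle_dec (Rmin y0 y) w), (Rle_dec w (Rmax y0 y));
    [apply Hy; lra | apply Hnear', Rabs_lt_between' ..];
    unfold Rmin, Rmax in *; repeat destruct Rle_dec; lra.
Qed.

Lemma is_derive_RInt_inv g y0 y : (forall w, continuous g w) -> nonvanishing_between g y0 y ->
  is_derive (fun z => RInt (fun s => / g s) y0 z) y (/ g y).
Proof.
  intros Hg Hy; apply (is_derive_RInt (fun s => / g s) _ y0).
  - destruct (nonvanishing_between_locally g y0 y (Hg y) Hy) as [eps Heps].
    exists eps; intros z Hz.
    apply (RInt_correct (V := R_CompleteNormedModule)), (ex_RInt_continuous (V := R_CompleteNormedModule)).
    intros w Hw; apply continuous_Rinv_comp; [apply Hg | exact (Heps z Hz w Hw)].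
  - apply continuous_Rinv_comp; [apply Hg | exact (nonvanishing_between_r g y0 y Hy)].
Qed.

Lemma abel_solution_nonvanishing_between g A B C x : abel_solution A B C x ->
  (forall t, 0 <= t <= 1 -> g (x t) <> 0) ->
  forall t, 0 <= t <= 1 -> nonvanishing_between g (x 0) (x t).
Proof.
  intros Hx Hg t Ht w Hw.
  destruct (IVT_gen (extend01 x) 0 t w (abel_solution_continuity_pt A B C x Hx)) as [s [Hs Es]].
  { rewrite !extend01_id by lra; exact Hw. }
  rewrite Rmin_left, Rmax_right in Hs by lra; rewrite extend01_id in Es by lra.
  rewrite <- Es; apply Hg; lra.
Qed.

Definition yqpoly (a b c y : R) : R := y * qpoly a b c y.

Definition qprimitive (a b c y0 y : R) : R := RInt (fun s => / yqpoly a b c s) y0 y.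

Lemma continuous_yqpoly a b c w : continuous (yqpoly a b c) w.
Proof. apply (ex_derive_continuous (yqpoly a b c)); unfold yqpoly, qpoly; auto_derive; exact I. Qed.

Lemma is_derive_qprimitive a b c y0 y : nonvanishing_between (yqpoly a b c) y0 y ->
  is_derive (qprimitive a b c y0) y (/ yqpoly a b c y).
Proof. apply is_derive_RInt_inv, continuous_yqpoly. Qed.

Section QprimitiveAlongSolution.

Variables (A B C : R -> R) (a b c y0 : R) (x : R -> R).
Hypothesis Hx : abel_solution A B C x.
Hypothesis Hbetween : forall t, 0 <= t <= 1 -> nonvanishing_between (yqpoly a b c) y0 (x t).

Lemma continuity_pt_qprimitive_solution t :
  continuity_pt (fun s => qprimitive a b c y0 (extend01 x s)) t.
Proof.
  apply (continuity_pt_comp (extend01 x)); [exact (abel_solution_continuity_pt A B C x Hx t)|].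
  apply continuity_pt_filterlim, (ex_derive_continuous (qprimitive a b c y0)).
  eexists; apply is_derive_qprimitive, Hbetween, clamp01_in.
Qed.

Lemma is_derive_qprimitive_solution t : 0 < t < 1 ->
  is_derive (fun s => qprimitive a b c y0 (extend01 x s)) t
    (ppoly (A t) (B t) (C t) (x t) / qpoly a b c (x t)).
Proof.
  intros Ht.
  assert (Hxt : nonvanishing_between (yqpoly a b c) y0 (extend01 x t))
    by (rewrite extend01_id by lra; apply Hbetween; lra).
  pose proof (nonvanishing_between_r _ _ _ Hxt) as Hyq; rewrite extend01_id in Hyq by lra.
  pose proof (is_derive_comp _ _ _ _ _ (is_derive_qprimitive a b c y0 _ Hxt)
                (abel_solution_is_derive A B C x Hx t Ht)) as H.
  replace (ppoly (A t) (B t) (C t) (x t) / qpoly a b c (x t))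
    with (scal (abel_rhs A B C t (x t)) (/ yqpoly a b c (extend01 x t))); [exact H|].
  rewrite extend01_id, abel_rhs_ppoly by lra; unfold yqpoly in *; unfold scal; simpl; unfold mult; simpl.
  field; split; intros E; apply Hyq; rewrite E; ring.
Qed.

End QprimitiveAlongSolution.

Lemma periodic_orbits_same_component_meet A B C a b c y0 x1 x2 :
  (forall t, 0 <= t <= 1 -> criterion a b c (A t) (B t) (C t) < 0) ->
  periodic_orbit A B C x1 -> periodic_orbit A B C x2 ->
  (forall t, 0 <= t <= 1 -> nonvanishing_between (yqpoly a b c) y0 (x1 t)) ->
  (forall t, 0 <= t <= 1 -> nonvanishing_between (yqpoly a b c) y0 (x2 t)) ->
  exists t, 0 <= t <= 1 /\ x1 t = x2 t.
Proof.
  intros Hcr [S1 P1] [S2 P2] G1 G2.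
  set (h := qprimitive a b c y0).
  set (R := fun t y => ppoly (A t) (B t) (C t) y / qpoly a b c y).
  destruct (MVT_closed (fun t => h (extend01 x2 t) - h (extend01 x1 t))
              (fun t => R t (x2 t) - R t (x1 t)) 0 1) as [m [Hm E]].
  - lra.
  - intros t Ht; apply (is_derive_minus (fun s => h (extend01 x2 s)) (fun s => h (extend01 x1 s)));
      apply is_derive_qprimitive_solution; assumption.
  - intros t _; apply continuity_pt_minus; apply continuity_pt_qprimitive_solution with A B C; assumption.
  - exists m; split; [exact Hm|].
    rewrite !extend01_id, P1, P2, Rminus_diag in E by lra.
    assert (Hmeet : R m (x1 m) = R m (x2 m)) by lra; unfold R in Hmeet.
    assert (Gm : nonvanishing_between (yqpoly a b c) (x1 m) (x2 m))
      by (apply nonvanishing_between_trans with y0; [apply nonvanishing_between_sym|]; auto).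
    assert (Hq : forall u v, Rmin (x1 m) (x2 m) <= u -> v <= Rmax (x1 m) (x2 m) ->
                   forall w, u <= w <= v -> qpoly a b c w <> 0).
    { intros u v Hu Hv w Hw E'; apply (Gm w); [lra | unfold yqpoly; rewrite E'; ring]. }
    destruct (Rtotal_order (x1 m) (x2 m)) as [Hlt|[Heq|Hgt]]; [| exact Heq |]; exfalso.
    + pose proof (ratio_strict_mono a b c _ _ _ _ _ (Hcr m Hm) Hlt
                    (Hq _ _ (Rmin_l _ _) (Rmax_r _ _))) as H.
      rewrite Hmeet, Rminus_diag, Rmult_0_r in H; lra.
    + pose proof (ratio_strict_mono a b c _ _ _ _ _ (Hcr m Hm) Hgt
                    (Hq _ _ (Rmin_r _ _) (Rmax_l _ _))) as H.
      rewrite Hmeet, Rminus_diag, Rmult_0_r in H; lra.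
Qed.

Lemma criterion_neg_lin_neq0 a b c Av Bv Cv :
  criterion a b c Av Bv Cv < 0 -> a * Av + b * Bv <> 0.
Proof.
  unfold criterion; intros H E; rewrite E, Rmult_0_l in H.
  pose proof (pow2_ge_0 (b * Cv - c * Av)); lra.
Qed.

Lemma nonvanishing_constant_sign (f : R -> R) :
  (forall t, 0 <= t <= 1 -> f t <> 0) ->
  (forall t, 0 <= t <= 1 -> 0 <= f t) \/ (forall t, 0 <= t <= 1 -> f t <= 0) ->
  exists sg, forall t, 0 <= t <= 1 -> 0 < sg * f t.
Proof.
  intros Hf [Hpos|Hneg]; [exists 1 | exists (-1)]; intros t Ht;
    pose proof (Hf t Ht); [pose proof (Hpos t Ht) | pose proof (Hneg t Ht)]; lra.
Qed.

Lemma qpoly_roots a b c : a <> 0 \/ b <> 0 ->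
  exists z1 z2, forall w, qpoly a b c w = 0 -> w = z1 \/ w = z2.
Proof.
  intros Hab; unfold qpoly; destruct (Req_dec b 0) as [->|Hb].
  - assert (Ha : a <> 0) by tauto.
    exists (c / a), (c / a); intros w Hw; left; field_simplify_eq; [lra | exact Ha].
  - set (D := a ^ 2 - 4 * b * c).
    assert (Hsq : forall w, b * w ^ 2 - a * w + c = 0 -> (2 * b * w - a)² = D).
    { intros w Hw; unfold Rsqr, D.
      replace ((2 * b * w - a) * (2 * b * w - a)) with (4 * b * (b * w ^ 2 - a * w + c) + (a ^ 2 - 4 * b * c))
        by ring.
      rewrite Hw; ring. }
    destruct (Rle_or_lt 0 D) as [HD|HD].
    + exists ((a + sqrt D) / (2 * b)), ((a - sqrt D) / (2 * b)); intros w Hw.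
      pose proof (Hsq w Hw) as E; rewrite <- (Rsqr_sqrt D HD) in E.
      apply Rsqr_eq in E; destruct E; [left | right]; field_simplify_eq; auto; lra.
    + exists 0, 0; intros w Hw; pose proof (Hsq w Hw); pose proof (Rle_0_sqr (2 * b * w - a)); lra.
Qed.

Definition count_below (z1 z2 y : R) : nat :=
  ((if Rlt_dec 0 y then 1 else 0) + (if Rlt_dec z1 y then 1 else 0)
   + (if Rlt_dec z2 y then 1 else 0))%nat.

Lemma count_below_lt z1 z2 y : (count_below z1 z2 y < 4)%nat.
Proof. unfold count_below; repeat destruct Rlt_dec; simpl; lia. Qed.

Lemma count_below_eq_nonvanishing a b c z1 z2 y y' :
  (forall w, qpoly a b c w = 0 -> w = z1 \/ w = z2) ->
  yqpoly a b c y <> 0 -> yqpoly a b c y' <> 0 ->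
  count_below z1 z2 y = count_below z1 z2 y' -> nonvanishing_between (yqpoly a b c) y y'.
Proof.
  intros Hroots Hy Hy' Hc w Hw Hw0.
  assert (Hz : w = 0 \/ w = z1 \/ w = z2).
  { unfold yqpoly in Hw0; apply Rmult_integral in Hw0 as [|Hq]; [left | right; apply Hroots]; assumption. }
  destruct (Req_dec w y) as [->|Hwy]; [contradiction|].
  destruct (Req_dec w y') as [->|Hwy']; [contradiction|].
  unfold count_below, Rmin, Rmax in *; destruct Rle_dec;
    destruct Hz as [-> | [-> | ->]]; repeat destruct Rlt_dec; simpl in Hc; try lia; lra.
Qed.

Lemma pigeonhole_nth {T : Type} (f : T -> nat) (n : nat) (l : list T) (d : T) :
  (forall x, In x l -> (f x < n)%nat) -> (n < length l)%nat ->
  exists i j, (i < j < length l)%nat /\ f (nth i l d) = f (nth j l d).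
Proof.
  intros Hf Hl; apply NNPP; intros Hn.
  assert (Hnd : NoDup (map f l)).
  { apply (NoDup_nth (map f l) (f d)); intros i j Hi Hj E.
    rewrite length_map in Hi, Hj; rewrite !map_nth in E.
    destruct (Nat.lt_total i j) as [Hij|[Hij|Hij]]; [| exact Hij |]; exfalso; apply Hn;
      [exists i, j | exists j, i]; auto. }
  assert (Hincl : incl (map f l) (seq 0 n)).
  { intros y Hy; apply in_map_iff in Hy as [x [<- Hx]]; apply in_seq; specialize (Hf x Hx); lia. }
  pose proof (NoDup_incl_length Hnd Hincl); rewrite length_map, length_seq in *; lia.
Qed.

Theorem theorem5p2 (A B C : R -> R) :
  smooth A -> smooth B -> smooth C ->
  (exists a b c : R,
      (exists t, 0 <= t <= 1 /\ a * A t + b * B t <> 0) /\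
      ((forall t, 0 <= t <= 1 -> 0 <= a * A t + b * B t) \/
       (forall t, 0 <= t <= 1 -> a * A t + b * B t <= 0)) /\
      (forall t, 0 <= t <= 1 ->
         (b * C t - c * A t) ^ 2 + (a * A t + b * B t) * (c * B t + a * C t) < 0)) ->
  forall xs : list (R -> R),
    (forall x, In x xs -> nonzero_periodic_orbit A B C x) ->
    (forall i j, (i < j < length xs)%nat ->
       differ_on01 (nth i xs (fun _ => 0)) (nth j xs (fun _ => 0))) ->
    (length xs <= 4)%nat.
Proof.
  intros SA SB SC [a [b [c [_ [Hsign Hcr]]]]] xs Horb Hdiff.
  pose proof (fun t (_ : 0 <= t <= 1) => smooth_continuity_pt A SA t) as CA.
  pose proof (fun t (_ : 0 <= t <= 1) => smooth_continuity_pt B SB t) as CB.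
  pose proof (fun t (_ : 0 <= t <= 1) => smooth_continuity_pt C SC t) as CC.
  pose proof (fun t Ht => criterion_neg_lin_neq0 _ _ _ _ _ _ (Hcr t Ht)) as HL.
  destruct (nonvanishing_constant_sign _ HL Hsign) as [sg Hsg].
  assert (Hab : a <> 0 \/ b <> 0).
  { destruct (Req_dec a 0) as [->|]; [|now left]; destruct (Req_dec b 0) as [->|]; [|now right].
    exfalso; apply (HL 0); [lra | ring]. }
  destruct (qpoly_roots a b c Hab) as [z1 [z2 Hroots]].
  assert (Havoid : forall x, In x xs -> forall t, 0 <= t <= 1 -> yqpoly a b c (x t) <> 0).
  { intros x Hx t Ht; apply Rmult_integral_contrapositive; split;
      [apply (nonzero_periodic_orbit_neq0 A B C) | apply (periodic_orbit_qpoly_neq0 A B C a b c sg)]; auto. }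
  apply Nat.nlt_ge; intros Hlen.
  destruct (pigeonhole_nth (fun x => count_below z1 z2 (x 0)) 4 xs (fun _ => 0)
              (fun x _ => count_below_lt z1 z2 (x 0)) Hlen) as [i [j [Hij Hcount]]].
  set (x1 := nth i xs (fun _ => 0)) in *; set (x2 := nth j xs (fun _ => 0)) in *.
  assert (I1 : In x1 xs) by (apply nth_In; lia); assert (I2 : In x2 xs) by (apply nth_In; lia).
  destruct (Horb x1 I1) as [[S1 P1] _], (Horb x2 I2) as [[S2 P2] _].
  destruct (periodic_orbits_same_component_meet A B C a b c (x1 0) x1 x2 Hcr (conj S1 P1) (conj S2 P2))
    as [t [Ht Hmeet]].
  - exact (abel_solution_nonvanishing_between _ A B C x1 S1 (Havoid x1 I1)).
  - intros t Ht; apply nonvanishing_between_trans with (x2 0);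
      [apply (count_below_eq_nonvanishing a b c z1 z2); auto; apply Havoid; auto; lra |].
    exact (abel_solution_nonvanishing_between _ A B C x2 S2 (Havoid x2 I2) t Ht).
  - destruct (Hdiff i j Hij) as [s [Hs Hne]]; apply Hne.
    exact (abel_solution_unique A B C x1 x2 CA CB CC S1 S2 t Ht Hmeet s Hs).
Qed.
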